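(* For each prime $p$, the function $n\mapsto\mathrm{ord}_p(\overline{F}_n)$ takes both positive and negative values. More precisely: (1) For every prime $p$, $\mathrm{ord}_p(\overline{F}_p)=p-1>0$. (2) $\mathrm{ord}_2(\overline{F}_7)=-1$. For every odd prime $p$, $\mathrm{ord}_p(\overline{F}_{3p-1})=-\frac{p-1}{2}$, and more generally $\mathrm{ord}_p(\overline{F}_n)<0$ for all integers $n$ with $\frac{8}{3}p\le n\le 3p-1$.
   Context: For a positive integer $n$, $\overline{F}_n=\Big(\prod_{1\le h\le k\le n,\ \gcd(h,k)=1}\frac{h}{k}\Big)^{-1}$ is the reciprocal of the product of all nonzero Farey fractions of order $n$. For a nonzero rational $x$, $\mathrm{ord}_p(x)$ is the exponent of the prime $p$ in $x$ (possibly negative). *)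

From mathcomp Require Import all_boot all_order all_algebra.
Set Implicit Arguments. Unset Strict Implicit. Unset Printing Implicit Defensive.
Import Order.TTheory GRing.Theory Num.Theory.
Local Open Scope ring_scope.

Definition Fbar (n : nat) : rat :=
  (\prod_(k < n.+1) \prod_(h < n.+1 | (0 < h)%N && (h <= k)%N && coprime h k)
      ((h%:R : rat) / (k%:R : rat)))^-1.

Definition ordp (p : nat) (x : rat) : int :=
  (logn p `|numq x|%N)%:Z - (logn p `|denq x|%N)%:Z.

From mathcomp Require Import all_boot all_order all_algebra.
From mathcomp Require Import zify ring.
Set Implicit Arguments. Unset Strict Implicit. Unset Printing Implicit Defensive.
Import Order.TTheory GRing.Theory Num.Theory.

(* Grouping the Farey fractions h/k by their denominator k, ord_p(Fbar n) is the sum over k <= n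
   of the defect  phi(k) ord_p(k) - sum_{1 <= h <= k, (h,k) = 1} ord_p(h).  Below 3p only the
   integers p and 2p carry p-adic weight, so the defect is p - 1 at k = p and at k = 2p (p odd),
   -1 for p < k < 2p (the fraction p/k), and -1 - [k odd] for 2p < k < 3p (the fractions p/k and
   2p/k).  Summing, ord_p(Fbar n) = 4p - 1 - n - ceil(n/2) for 2p <= n < 3p, which is negative
   as soon as 3n >= 8p. *)

Lemma logn_small p m : m < p -> logn p m = 0.
Proof.
rewrite lognE; case: ifP => // /and3P[_ m0 /(dvdn_leq m0)].
by rewrite leqNgt => /negbTE ->.
Qed.

Lemma ndvdn_between p m k : m * p < k < m.+1 * p -> ~~ (p %| k).
Proof.
case/andP=> lo hi; apply/negP => /dvdnP[q kq]; rewrite {}kq in lo hi.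
rewrite ltn_mul2r in lo; rewrite ltn_mul2r in hi.
case/andP: lo => _; case/andP: hi => _; lia.
Qed.

Lemma logn_lt3p p h : prime p -> odd p -> h < 3 * p ->
  logn p h = (h == p) + (h == 2 * p).
Proof.
move=> pp op h3; have p1 := prime_gt1 pp.
have [/dvdnP[m hm] | nph] := boolP (p %| h); last first.
  have -> : (h == p) = false by apply: contraNF nph => /eqP ->.
  have -> : (h == 2 * p) = false by apply: contraNF nph => /eqP ->; exact: dvdn_mull.
  by rewrite logn_coprime ?prime_coprime.
rewrite {h}hm in h3 *.
have : m < 3 by move: h3; rewrite ltn_pmul2r // prime_gt0.
have p2 : p != 2 by apply: contraTneq op => ->.
case: m {h3} => [|[|[|//]]] _.
- rewrite mul0n logn0; lia.
- rewrite mul1n logn_prime // eqxx /=; lia.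
- rewrite lognM ?prime_gt0 // !logn_prime // eqxx (negbTE p2) /=; lia.
Qed.

Lemma sum_nat_eq (P : pred nat) m n a :
  \sum_(m <= i < n | P i) (i == a) = (m <= a < n) && P a.
Proof.
have [/andP[ha Pa] | nPa] := boolP ((m <= a < n) && P a).
  rewrite big_mkcond (bigD1_seq a) ?mem_index_iota ?iota_uniq //= Pa eqxx big1 // => i.
  by move/negbTE ->; case: (P i).
rewrite big1_seq // => i /andP[Pi]; rewrite mem_index_iota => hi.
by apply/eqP; rewrite eqb0; apply: contraNneq nPa => <-; rewrite hi.
Qed.

Lemma sum_coprime_totient k : \sum_(1 <= h < k.+1 | coprime h k) 1 = totient k.
Proof.
case: k => [|k]; first by rewrite big_geq.
rewrite big_mkcond totient_count_coprime big_nat_recr //= [RHS]big_ltn //.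
have -> : coprime k.+1 k.+1 = coprime k.+1 0 by rewrite /coprime gcdnn gcdn0.
rewrite addnC; congr (_ + _); apply: eq_bigr => h _.
by rewrite coprime_sym; case: coprime.
Qed.

Lemma big_ord_coprime_le (R : Type) (idx : R) (op : Monoid.law idx)
    n k (F : nat -> R) : k <= n ->
  \big[op/idx]_(h < n.+1 | (0 < h) && (h <= k) && coprime h k) F h =
  \big[op/idx]_(1 <= h < k.+1 | coprime h k) F h.
Proof.
move=> kn; rewrite (big_nat_widen _ _ n.+1) // (big_nat_widenl 1 0) // big_mkord.
by apply: eq_bigl => h; rewrite ltnS; case: (0 < h); case: (h <= k); case: coprime.
Qed.

Local Open Scope ring_scope.

Lemma ordp_frac p (a b : int) : a != 0 -> b != 0 ->
  ordp p (a%:~R / b%:~R) = (logn p `|a|)%:Z - (logn p `|b|)%:Z.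
Proof.
move=> a0 b0; set x := _ / _.
have x0 : x != 0 by rewrite mulf_neq0 ?invr_eq0 ?intr_eq0.
have cross : numq x * b = a * denq x.
  apply: (@intr_inj rat); rewrite !intrM numqE /x; field; by rewrite intr_eq0.
have /(congr1 (logn p)) : (`|numq x| * `|b| = `|a| * `|denq x|)%N by rewrite -!abszM cross.
rewrite !lognM ?absz_gt0 ?numq_eq0 ?(gt_eqF (denq_gt0 x)) // /ordp; lia.
Qed.

Lemma ordp_nat p n : (0 < n)%N -> ordp p n%:R = (logn p n)%:Z.
Proof.
move=> n0; have := @ordp_frac p n 1; rewrite divr1 /= => -> //; last by rewrite -lt0n.
by rewrite logn1 subr0.
Qed.

Lemma ordp_mul p x y : x != 0 -> y != 0 -> ordp p (x * y) = ordp p x + ordp p y.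
Proof.
move=> x0 y0.
have -> : x * y = (numq x * numq y)%:~R / (denq x * denq y)%:~R.
  by rewrite !intrM invfM mulrACA !divq_num_den.
have nq0 z : z != 0 -> numq z != 0 by rewrite numq_eq0.
rewrite ordp_frac ?mulf_neq0 ?nq0 // /ordp !abszM !lognM ?absz_gt0 ?nq0 //; lia.
Qed.

Lemma ordp_inv p x : ordp p x^-1 = - ordp p x.
Proof.
have [-> | x0] := eqVneq x 0; first by rewrite invr0 [ordp p 0]/ordp /= logn0 logn1.
rewrite -{1}[x]divq_num_den invf_div ordp_frac ?numq_eq0 ?(gt_eqF (denq_gt0 x)) //.
by rewrite /ordp opprB.
Qed.

Lemma ordp_prod p (I : Type) (r : seq I) (P : pred I) (F : I -> rat) :
  (forall i, P i -> F i != 0) ->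
  ordp p (\prod_(i <- r | P i) F i) = \sum_(i <- r | P i) ordp p (F i).
Proof.
move=> F0; elim: r => [|i r IH]; first by rewrite !big_nil [ordp p 1]/ordp /= logn1.
rewrite !big_cons; case: ifP => // Pi.
rewrite ordp_mul ?IH ?F0 //.
by apply: (big_ind (fun x => x != 0)); [exact: oner_neq0 | exact: mulf_neq0 | exact: F0].
Qed.

Definition farey_defect (p k : nat) : int :=
  \sum_(1 <= h < k.+1 | coprime h k) ((logn p k)%:Z - (logn p h)%:Z).

Lemma ordp_Fbar p n : ordp p (Fbar n) = \sum_(k < n.+1) farey_defect p k.
Proof.
have nat0 (m : nat) : (0 < m)%N -> (m%:R : rat) != 0 by rewrite pnatr_eq0 -lt0n.
have ratio0 (h k : nat) : (0 < h <= k)%N -> (h%:R / k%:R : rat) != 0.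
  by case/andP=> h0 hk; rewrite mulf_neq0 ?invr_eq0 ?nat0 // (leq_trans h0).
rewrite /Fbar ordp_inv ordp_prod => [|k _]; last first.
  by rewrite prodf_seq_neq0; apply/allP => h _; apply/implyP => /andP[/ratio0].
rewrite -sumrN; apply: eq_bigr => k _.
rewrite ordp_prod => [|h /andP[/ratio0 //]].
rewrite -sumrN /farey_defect -(big_ord_coprime_le _ _ (ltn_ord k : (k <= n)%N)).
apply: eq_bigr => h /andP[/andP[h0 hk] _].
have k0 : (0 < k)%N := leq_trans h0 hk.
by rewrite ordp_mul ?invr_eq0 ?nat0 // ordp_inv !ordp_nat // opprD opprK addrC.
Qed.

Lemma farey_defect_small p k : (k < p)%N -> farey_defect p k = 0.
Proof.
move=> kp; rewrite /farey_defect big_nat_cond big1 // => h /andP[/andP[_ hk] _].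
by rewrite !logn_small // (leq_trans hk).
Qed.

Lemma farey_defect_dvd p k : (p %| k)%N ->
  farey_defect p k = (totient k * logn p k)%N%:Z.
Proof.
move=> pk; rewrite -sum_coprime_totient big_distrl /= raddf_sum.
apply: eq_bigr => h hk; rewrite mul1n (@logn_coprime p h) ?subr0 //.
by rewrite coprime_sym (coprime_dvdr pk hk).
Qed.

Lemma farey_defect_ndvd p k : ~~ (p %| k)%N ->
  farey_defect p k = - (\sum_(1 <= h < k.+1 | coprime h k) logn p h)%N%:Z.
Proof.
move=> npk; rewrite /farey_defect (lognE p k) (negbTE npk) !andbF raddf_sum -sumrN.
by apply: eq_bigr => h _; rewrite sub0r.
Qed.

Lemma sum_logn_coprime_lt3p p k : prime p -> odd p -> ~~ (p %| k)%N -> (k < 3 * p)%N ->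
  (\sum_(1 <= h < k.+1 | coprime h k) logn p h =
   (p < k) + ((2 * p < k) && odd k))%N.
Proof.
move=> pp op npk k3.
rewrite big_nat_cond (eq_bigr (fun h => (h == p) + (h == 2 * p)))%N => [|h /andP[/andP[_ hk] _]]; last first.
  by rewrite logn_lt3p // (leq_trans hk).
rewrite -big_nat_cond big_split /= !sum_nat_eq coprimeMl coprime2n prime_coprime // npk andbT.
have kp : k != p by apply: contraNneq npk => ->.
have k2p : k != (2 * p)%N by apply: contraNneq npk => ->; exact: dvdn_mull.
have p0 := prime_gt0 pp.
lia.
Qed.

Section FareyPartialSums.

Variable p : nat.
Hypothesis p_prime : prime p.

Lemma farey_defect_prime : farey_defect p p = p.-1%:Z.
Proof. by rewrite farey_defect_dvd // totient_prime // logn_prime // eqxx muln1. Qed.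

Lemma farey_sum_prime : \sum_(k < p.+1) farey_defect p k = p.-1%:Z.
Proof.
rewrite big_ord_recr /= farey_defect_prime big1 ?add0r // => k _.
exact: farey_defect_small (ltn_ord k).
Qed.

Hypothesis p_odd : odd p.

Lemma farey_defect_double : farey_defect p (2 * p) = p.-1%:Z.
Proof.
have p2 : p != 2 by apply: contraTneq p_odd => ->.
rewrite farey_defect_dvd ?dvdn_mull // totient_coprime ?coprime2n // !totient_prime //.
by rewrite lognM ?prime_gt0 // !logn_prime // eqxx (negbTE p2) /= mul1n muln1.
Qed.

Lemma farey_sum_mid n : (p <= n < 2 * p)%N ->
  \sum_(k < n.+1) farey_defect p k = p.-1%:Z - (n - p)%N%:Z.
Proof.
elim: n => [|n IH] /andP[pn n2p]; first by have := prime_gt0 p_prime; lia.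
move: pn; rewrite leq_eqVlt => /orP[/eqP <- | pn]; first by rewrite farey_sum_prime subnn subr0.
have npn : ~~ (p %| n.+1)%N by apply: (@ndvdn_between _ 1); lia.
rewrite big_ord_recr /= IH ?farey_defect_ndvd ?sum_logn_coprime_lt3p //; lia.
Qed.

Lemma farey_sum_high n : (2 * p <= n < 3 * p)%N ->
  \sum_(k < n.+1) farey_defect p k = (4 * p)%N%:Z - 1 - n%:Z - (n.+1)./2%:Z.
Proof.
elim: n => [|n IH] /andP[pn n3p]; first by have := prime_gt0 p_prime; lia.
move: pn; rewrite leq_eqVlt => /orP[/eqP e | pn].
  by rewrite big_ord_recr /= farey_sum_mid -?e ?farey_defect_double; lia.
have npn : ~~ (p %| n.+1)%N by apply: (@ndvdn_between _ 2); lia.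
rewrite big_ord_recr /= IH ?farey_defect_ndvd ?sum_logn_coprime_lt3p //; lia.
Qed.

End FareyPartialSums.

Lemma ordp2_Fbar7 : ordp 2 (Fbar 7) = -1.
Proof. by rewrite ordp_Fbar -(big_mkord xpredT) /farey_defect unlock. Qed.

Lemma ordp_Fbar_prime p : prime p -> ordp p (Fbar p) = p.-1%:Z.
Proof. by move=> pp; rewrite ordp_Fbar farey_sum_prime. Qed.

Lemma ordp_Fbar_high p n : prime p -> odd p -> (2 * p <= n < 3 * p)%N ->
  ordp p (Fbar n) = (4 * p)%N%:Z - 1 - n%:Z - (n.+1)./2%:Z.
Proof. by move=> pp op hn; rewrite ordp_Fbar farey_sum_high. Qed.

Theorem theorem4p10 :
  (forall p : nat, prime p ->
     (exists n : nat, 0 < ordp p (Fbar n)) /\ (exists n : nat, ordp p (Fbar n) < 0))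
  /\ (forall p : nat, prime p -> ordp p (Fbar p) = (p.-1)%:Z /\ 0 < ordp p (Fbar p))
  /\ ordp 2 (Fbar 7) = -1
  /\ (forall p : nat, prime p -> odd p ->
        ordp p (Fbar (3 * p).-1) = - ((p.-1)./2)%:Z
        /\ (forall n : nat, (8 * p <= 3 * n)%N -> (n <= (3 * p).-1)%N ->
              ordp p (Fbar n) < 0)).
Proof.
have positive p : prime p -> ordp p (Fbar p) = p.-1%:Z /\ 0 < ordp p (Fbar p).
  by move=> pp; rewrite ordp_Fbar_prime //; have := prime_gt1 pp; split=> //; lia.
have negative p n : prime p -> odd p -> (8 * p <= 3 * n)%N -> (n <= (3 * p).-1)%N ->
    ordp p (Fbar n) < 0.
  by move=> pp op lo hi; rewrite ordp_Fbar_high //; lia.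
split; [move=> p pp; split | split; [exact: positive | split; first exact: ordp2_Fbar7]].
- by exists p; case: (positive p pp).
- have [-> | op] := even_prime pp; first by exists 7; rewrite ordp2_Fbar7.
  by exists (3 * p)%N.-1; apply: negative => //; have := odd_prime_gt2 op pp; lia.
- move=> p pp op; split=> [|n]; last exact: negative.
  by rewrite ordp_Fbar_high //; have := prime_gt1 pp; lia.
Qed.
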